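(* Let $f(\mathbf{x}) \in \mathbb{C}[\mathbf{x}]$ be a polynomial that is set-multilinear with respect to a partition $\mathbf{x} = \mathbf{x}_1 \sqcup \cdots \sqcup \mathbf{x}_d$ of its variables. Then the smallest width of a commutative set-multilinear ABP (with respect to this partition) computing $f$ is at most $\mathrm{DPD}(f)$.
   Context: A polynomial is set-multilinear with respect to a partition $\mathbf{x} = \mathbf{x}_1\sqcup\cdots\sqcup\mathbf{x}_d$ if each of its monomials contains exactly one variable from each part $\mathbf{x}_j$ (with degree one). Write $\mathbf{x}_j = \{x_{j,1},\ldots,x_{j,|\mathbf{x}_j|}\}$. A set-multilinear ABP (smABP) of width $w$ computing $f$ consists of a permutation $\sigma$ of $[d]$, matrices $A_{j,k}\in\mathbb{C}^{w\times w}$ for $j\in[d]$, $1\le k\le |\mathbf{x}_j|$, and vectors $\mathbf{u},\mathbf{v}\in\mathbb{C}^w$ such that $f(\mathbf{x}) = \mathbf{u}^T M_{\sigma(1)}(\mathbf{x}_{\sigma(1)})\cdots M_{\sigma(d)}(\mathbf{x}_{\sigma(d)})\mathbf{v}$, where $M_j(\mathbf{x}_j) = \sum_{k=1}^{|\mathbf{x}_j|} A_{j,k} x_{j,k}$; the $A_{j,k}$ are its coefficient matrices. A commutative smABP is one whose coefficient matrices all pairwise commute. For $f \in \mathbb{C}[\mathbf{x}]$, $\mathrm{DPD}(f) := \dim_{\mathbb{C}}\mathrm{span}_{\mathbb{C}}\{\partial_{\mathbf{e}} f : \mathbf{e}\}$ is the dimension of the span of all partial derivatives of $f$ of all orders (including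 $f$ itself), where $\partial_{\mathbf{e}} f$ is the partial derivative with respect to the monomial $\mathbf{x}^{\mathbf{e}}$. *)

From HB Require Import structures.
From mathcomp Require Import all_boot all_order all_algebra all_fingroup.
From mathcomp Require Import mpoly.
From Stdlib Require Import ClassicalEpsilon.

Set Implicit Arguments.
Unset Strict Implicit.
Unset Printing Implicit Defensive.

Import GRing.Theory.
Local Open Scope ring_scope.

Section Defs.

Variable C : fieldType.

Section Span.
Variable V : lmodType C.

Definition in_span (P : V -> Prop) (v : V) : Prop :=
  exists (k : nat) (g : 'I_k -> V) (c : 'I_k -> C),
    (forall i, P (g i)) /\ v = \sum_(i < k) c i *: g i.

Definition lin_indep (D : nat) (b : 'I_D -> V) : Prop :=
  forall c : 'I_D -> C, \sum_(i < D) c i *: b i = 0 -> forall i, c i = 0.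

Definition is_span_dim (P : V -> Prop) (D : nat) : Prop :=
  exists b : 'I_D -> V,
    [/\ forall i, in_span P (b i),
        lin_indep b &
        forall v, P v -> in_span (fun x => exists i, x = b i) v].

(* dim_C span(P) (a well-defined natural number whenever span(P) is
   finite-dimensional, which is the case for the spans used below) *)
Definition span_dim (P : V -> Prop) : nat :=
  epsilon (inhabits 0%N) (is_span_dim P).
End Span.

Variables n d : nat.

Definition all_partials (f : {mpoly C[n]}) : {mpoly C[n]} -> Prop :=
  fun g => exists e : 'X_{1..n}, g = mderivm e f.

Definition DPD (f : {mpoly C[n]}) : nat := span_dim (all_partials f).

(* The partition x = x_1 |_| ... |_| x_d is given by part : 'I_n -> 'I_d,
   variable 'X_i lying in block x_(part i). *)
Definition set_multilinear (part : 'I_n -> 'I_d) (f : {mpoly C[n]}) : Prop :=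
  forall m : 'X_{1..n}, m \in msupp f ->
    forall j : 'I_d, exists i : 'I_n,
      [/\ part i = j, m i = 1%N &
          forall i' : 'I_n, part i' = j -> i' != i -> m i' = 0%N].

Definition smABP_layer (part : 'I_n -> 'I_d) (w : nat)
    (A : 'I_n -> 'M[C]_w) (j : 'I_d) : 'M[{mpoly C[n]}]_w :=
  \sum_(i < n | part i == j) 'X_i *: map_mx (fun c => c%:MP) (A i).

(* the polynomial u^T M_{s(1)} ... M_{s(d)} v computed by the smABP *)
Definition smABP_poly (part : 'I_n -> 'I_d) (w : nat) (s : 'S_d)
    (A : 'I_n -> 'M[C]_w) (u v : 'cV[C]_w) : {mpoly C[n]} :=
  ((map_mx (fun c => c%:MP) u)^T *m
     foldr (fun j (acc : 'cV[{mpoly C[n]}]_w) => smABP_layer part A j *m acc)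
           (map_mx (fun c => c%:MP) v)
           [seq s j | j <- enum 'I_d]) ord0 ord0.

Definition has_comm_smABP (part : 'I_n -> 'I_d) (f : {mpoly C[n]}) (w : nat)
  : Prop :=
  exists (s : 'S_d) (A : 'I_n -> 'M[C]_w) (u v : 'cV[C]_w),
    (forall i i' : 'I_n, A i *m A i' = A i' *m A i) /\
    f = smABP_poly part s A u v.

End Defs.

(* Let b be a basis of the span of all partial derivatives of f.  Each
   derivation d/dx_i maps this span into itself, hence acts on coordinates
   w.r.t. b by a matrix A_i, and these matrices commute because partial
   derivatives do.  Take u = the constant terms of the b_k and v = the
   coordinates of f.  If g is set-multilinear in the blocks j_1, ..., j_k then
   g = sum_{x_i in block j_k} x_i d_i g (Euler's identity for one block), and
   d_i g is set-multilinear in j_1, ..., j_{k-1}; peeling off the blocks one at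
   a time shows u^T M_{j_1} ... M_{j_k} [g] = g, down to the constant term
   u^T [g] = g(0) for k = 0.  The width is dim span = DPD(f). *)

From HB Require Import structures.
From mathcomp Require Import all_boot all_algebra all_fingroup.
From mathcomp Require Import mpoly.
From Stdlib Require Import Classical ClassicalEpsilon.

Set Implicit Arguments.
Unset Strict Implicit.
Unset Printing Implicit Defensive.

Import GRing.Theory.
Local Open Scope ring_scope.

Section LinearCombinations.
Variables (C : fieldType) (V : lmodType C).

Definition lincomb D (b : 'I_D -> V) (c : 'cV[C]_D) : V :=
  \sum_(l < D) c l ord0 *: b l.

Definition spanned_by D (b : 'I_D -> V) (v : V) : Prop :=
  exists c : 'cV[C]_D, v = lincomb b c.

Lemma lincomb_is_linear D (b : 'I_D -> V) : linear (lincomb b).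
Proof.
move=> a c c'; rewrite /lincomb scaler_sumr -big_split; apply: eq_bigr => l _.
by rewrite !mxE scalerDl scalerA.
Qed.

HB.instance Definition _ D (b : 'I_D -> V) :=
  GRing.isLinear.Build C 'cV[C]_D V _ (lincomb b) (lincomb_is_linear b).

Lemma lincomb_delta D (b : 'I_D -> V) k : lincomb b (delta_mx k ord0) = b k.
Proof.
rewrite /lincomb (bigD1 k) //= mxE !eqxx scale1r big1 ?addr0 // => l /negbTE nlk.
by rewrite mxE nlk scale0r.
Qed.

Lemma spanned_by_basis D (b : 'I_D -> V) k : spanned_by b (b k).
Proof. by exists (delta_mx k ord0); rewrite lincomb_delta. Qed.

Lemma lincomb_inj D (b : 'I_D -> V) : lin_indep b -> injective (lincomb b).
Proof.
move=> indep_b c c' /eqP; rewrite -subr_eq0 -raddfB => /eqP lincomb_eq0.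
apply/matrixP => l k; rewrite ord1; apply/eqP; rewrite -subr_eq0; apply/eqP.
by move: (indep_b (fun i => (c - c') i ord0) lincomb_eq0 l); rewrite !mxE.
Qed.

Lemma in_span_spanned_by D (b : 'I_D -> V) (P : V -> Prop) v :
  (forall y, P y -> spanned_by b y) -> in_span P v -> spanned_by b v.
Proof.
move=> P_spanned [k [g [a [Pg ->]]]].
have /fin_all_exists [cg Hcg] : forall t, exists c, g t = lincomb b c.
  by move=> t; apply: P_spanned.
exists (\sum_(t < k) a t *: cg t); rewrite linear_sum; apply: eq_bigr => t _.
by rewrite linearZ Hcg.
Qed.

Definition ord_cons D (x : V) (b : 'I_D -> V) (i : 'I_D.+1) : V :=
  if unlift ord0 i is Some j then b j else x.

Lemma ord_cons0 D (x : V) (b : 'I_D -> V) : ord_cons x b ord0 = x.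
Proof. by rewrite /ord_cons unlift_none. Qed.

Lemma ord_cons_lift D (x : V) (b : 'I_D -> V) j :
  ord_cons x b (lift ord0 j) = b j.
Proof. by rewrite /ord_cons liftK. Qed.

Lemma lin_indep_cons D (b : 'I_D -> V) x :
  lin_indep b -> ~ spanned_by b x -> lin_indep (ord_cons x b).
Proof.
move=> indep_b x_free c; rewrite big_ord_recl ord_cons0.
under eq_bigr => j _ do rewrite ord_cons_lift.
move=> sum_eq0.
have c0 : c ord0 = 0.
  have [//|c0_neq0] := eqVneq (c ord0) 0; case: x_free.
  exists (\col_j - ((c ord0)^-1 * c (lift ord0 j))).
  apply: (scalerI c0_neq0); move/eqP: (sum_eq0); rewrite addr_eq0 => /eqP ->.
  rewrite /lincomb scaler_sumr -sumrN; apply: eq_bigr => j _.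
  by rewrite mxE !scalerA mulrN mulrA divff // mul1r scaleNr.
move: sum_eq0; rewrite c0 scale0r add0r => /indep_b c_lift0 i.
by case: (unliftP ord0 i) => [j ->|->].
Qed.

Lemma spanned_by_cons D (b : 'I_D -> V) x v :
  spanned_by b v -> spanned_by (ord_cons x b) v.
Proof.
move=> [c ->]; exists (\col_i if unlift ord0 i is Some j then c j ord0 else 0).
rewrite /lincomb big_ord_recl !mxE unlift_none scale0r add0r.
by apply: eq_bigr => j _; rewrite mxE liftK ord_cons_lift.
Qed.

Lemma exists_basis_seq (s : seq V) : exists D (b : 'I_D -> V),
  [/\ forall i, b i \in s, lin_indep b & forall x, x \in s -> spanned_by b x].
Proof.
elim: s => [|x s [D [b [b_in_s indep_b s_spanned]]]].
  by exists 0%N, (fun=> 0); split=> [[]|c _ []|].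
have [x_spanned|x_free] := classic (spanned_by b x).
  exists D, b; split=> [i|//|y].
    by rewrite in_cons b_in_s orbT.
  by rewrite in_cons => /orP[/eqP ->|/s_spanned].
exists D.+1, (ord_cons x b); split.
- move=> i; case: (unliftP ord0 i) => [j ->|->].
    by rewrite ord_cons_lift in_cons b_in_s orbT.
  by rewrite ord_cons0 mem_head.
- exact: lin_indep_cons.
- move=> y; rewrite in_cons => /orP[/eqP ->|/s_spanned]; last first.
    exact: spanned_by_cons.
  by have := spanned_by_basis (ord_cons x b) ord0; rewrite ord_cons0.
Qed.

Lemma in_span_self (P : V -> Prop) v : P v -> in_span P v.
Proof. by move=> Pv; exists 1%N, (fun=> v), (fun=> 1); rewrite big_ord1 scale1r. Qed.

Lemma lincomb_in_span D (b : 'I_D -> V) c :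
  in_span (fun x => exists i, x = b i) (lincomb b c).
Proof. by exists D, b, (fun i => c i ord0); split=> // i; exists i. Qed.

Lemma in_span_linear (phi : {linear V -> V}) (P : V -> Prop) v :
  (forall y, P y -> P (phi y)) -> in_span P v -> in_span P (phi v).
Proof.
move=> P_stable [k [g [a [Pg ->]]]]; exists k, (phi \o g), a; split=> [t|].
  exact/P_stable/Pg.
by rewrite linear_sum; apply: eq_bigr => t _; rewrite linearZ.
Qed.

Lemma span_dim_seqP (P : V -> Prop) (s : seq V) :
  (forall x, x \in s -> P x) ->
  (forall v, P v -> in_span (fun x => x \in s) v) ->
  is_span_dim P (span_dim P).
Proof.
move=> s_in_P P_in_span; apply: (epsilon_spec (inhabits 0%N) (is_span_dim P)).
have [D [b [b_in_s indep_b s_spanned]]] := exists_basis_seq s.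
exists D, b; split=> // [i|v /P_in_span /(in_span_spanned_by s_spanned) [c ->]].
  exact/in_span_self/s_in_P/b_in_s.
exact: lincomb_in_span.
Qed.

Lemma span_dim_basisP (P : V -> Prop) D : is_span_dim P D ->
  exists b : 'I_D -> V,
    [/\ forall i, in_span P (b i), lin_indep b & forall v, P v -> spanned_by b v].
Proof.
move=> [b [b_in_span indep_b P_in_span]]; exists b; split=> // v /P_in_span.
by apply: in_span_spanned_by => _ [i ->]; apply: spanned_by_basis.
Qed.

Lemma stable_span_mx (P : V -> Prop) D (b : 'I_D -> V) (phi : {linear V -> V}) :
  (forall i, in_span P (b i)) -> (forall v, P v -> spanned_by b v) ->
  (forall v, P v -> P (phi v)) ->
  exists A : 'M[C]_D, forall c, phi (lincomb b c) = lincomb b (A *m c).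
Proof.
move=> b_in_span P_spanned P_stable.
have /fin_all_exists [a Ha] : forall k, exists a, phi (b k) = lincomb b a.
  move=> k; apply: (in_span_spanned_by P_spanned).
  exact: in_span_linear (b_in_span k).
exists (\matrix_(l, k) a k l ord0) => c.
rewrite {1}/lincomb linear_sum.
under eq_bigr => k _ do rewrite linearZ Ha -linearZ.
rewrite -linear_sum; congr (lincomb b _); apply/matrixP => l j.
rewrite !mxE summxE; apply: eq_bigr => k _.
by rewrite !mxE [j]ord1 mulrC.
Qed.

Lemma lincomb_mx_comm D (b : 'I_D -> V) (phi psi : V -> V) (A B : 'M[C]_D) :
  lin_indep b ->
  (forall c, phi (lincomb b c) = lincomb b (A *m c)) ->
  (forall c, psi (lincomb b c) = lincomb b (B *m c)) ->
  (forall v, phi (psi v) = psi (phi v)) -> A *m B = B *m A.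
Proof.
move=> indep_b phiA psiB phi_psiC.
have eq_mul (c : 'cV_D) : A *m B *m c = B *m A *m c.
  apply: (lincomb_inj indep_b).
  by rewrite -!mulmxA -phiA -psiB -psiB -phiA phi_psiC.
by apply/matrixP => l k; apply: (@col_eq _ _ _ _ k k); rewrite !colE eq_mul.
Qed.

End LinearCombinations.

Section SetMultilinear.
Variables (R : comNzRingType) (n d : nat) (part : 'I_n -> 'I_d).

Definition mnm_block_linear (m : 'X_{1..n}) (j : 'I_d) : Prop :=
  exists i : 'I_n,
    [/\ part i = j, m i = 1%N & forall i', part i' = j -> i' != i -> m i' = 0%N].

Definition mnm_block_free (m : 'X_{1..n}) (j : 'I_d) : Prop :=
  forall i, part i = j -> m i = 0%N.

Definition set_multilinear_on (js : seq 'I_d) (g : {mpoly R[n]}) : Prop :=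
  forall m, m \in msupp g -> forall j,
    if j \in js then mnm_block_linear m j else mnm_block_free m j.

Lemma set_multilinear_on_nil (g : {mpoly R[n]}) :
  set_multilinear_on [::] g -> g = (g@_0)%:MP.
Proof.
move=> g_sml; apply/mpolyP => m; rewrite mcoeffC.
have [->|m_neq0] := eqVneq m 0%MM; first by rewrite mulr1.
rewrite mulr0; apply/eqP; rewrite mcoeff_eq0.
apply: contra m_neq0 => /g_sml m_free.
by apply/eqP/mnmP => i; rewrite mnm0E; apply: (m_free (part i)).
Qed.

Lemma mnm_addU_block (m : 'X_{1..n}) i i' :
  part i' != part i -> (m + U_(i))%MM i' = m i'.
Proof.
move=> part_neq; rewrite mnmDE mnm1E; case: eqP => [eq_ii'|]; last first.
  by rewrite addn0.
by move: part_neq; rewrite eq_ii' eqxx.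
Qed.

Lemma set_multilinear_on_mderiv js j i (g : {mpoly R[n]}) :
  j \notin js -> part i = j ->
  set_multilinear_on (rcons js j) g -> set_multilinear_on js g^`M(i).
Proof.
move=> j_notin part_i g_sml m; rewrite mcoeff_msupp mcoeff_deriv => coeff_neq0.
have /g_sml mU_sml : (m + U_(i))%MM \in msupp g.
  by rewrite mcoeff_msupp; apply: contra coeff_neq0 => /eqP ->; rewrite mul0rn.
move=> j'; have := mU_sml j'; rewrite mem_rcons in_cons.
have [-> /=|j'_neq /=] := eqVneq j' j.
  rewrite (negbTE j_notin) => -[i0 [part_i0 mU_i0 mU_other]] i' part_i'.
  have [->|i'_neq] := eqVneq i' i0; last first.
    by move: (mU_other i' part_i' i'_neq); rewrite mnmDE; case: (m i').
  have [eq_i|i_neq] := eqVneq i i0.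
    by move: mU_i0; rewrite -eq_i mnmDE mnm1E eqxx addn1 => -[].
  by move: (mU_other i part_i i_neq); rewrite mnmDE mnm1E eqxx addn1.
have block_eq i' : part i' = j' -> (m + U_(i))%MM i' = m i'.
  by move=> part_i'; apply: mnm_addU_block; rewrite part_i' part_i.
case: (j' \in js) => [[i0 [part_i0 mU_i0 mU_other]]|mU_free i' part_i'].
  exists i0; split=> // [|i' part_i' i'_neq].
    by rewrite -block_eq.
  by rewrite -block_eq // mU_other.
by rewrite -block_eq // mU_free.
Qed.

Lemma set_multilinear_on_euler js j (g : {mpoly R[n]}) :
  j \in js -> set_multilinear_on js g ->
  g = \sum_(i < n | part i == j) 'X_i * g^`M(i).
Proof.
move=> j_in g_sml; rewrite {1}[g]mpolyE.
under [RHS]eq_bigr => i _ do rewrite {1}[g]mpolyE raddf_sum mulr_sumr.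
rewrite [RHS]exchange_big /= big_seq [RHS]big_seq; apply: eq_bigr => m m_supp.
have := g_sml m m_supp j; rewrite j_in => -[i0 [part_i0 m_i0 m_other]].
rewrite (bigD1 i0) /=; last by rewrite part_i0 eqxx.
rewrite big1 ?addr0 => [|i /andP[/eqP part_i i_neq]]; last first.
  by rewrite mderivZ mderivX (m_other i part_i i_neq) scale0r scaler0 mulr0.
rewrite mderivZ mderivX m_i0 scale1r -scalerAr -mpolyXD; congr (_ *: 'X_[_]).
apply/mnmP => k; rewrite mnmDE mnmBE mnm1E.
by case: eqP => [<-|_]; rewrite ?m_i0 // add0n subn0.
Qed.

End SetMultilinear.

Section Partials.
Variables (C : fieldType) (n : nat).

Lemma mderivm_eq0 (e : 'X_{1..n}) (f : {mpoly C[n]}) :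
  (msize f <= mdeg e)%N -> f^`M[e] = 0.
Proof.
move=> size_le; rewrite mderivmE big_seq big1 // => m m_supp.
have [i lt_mi] : exists i, (m i < e i)%N.
  apply/existsP; apply: contraT; rewrite negb_exists => /forallP e_le_m.
  have : (mdeg e <= mdeg m)%N.
    by rewrite !mdegE; apply: leq_sum => i _; rewrite leqNgt e_le_m.
  by rewrite leqNgt (leq_trans (msize_mdeg_lt m_supp) size_le).
by rewrite (bigD1 i) //= ffact_small // mul0n mulr0 scale0r.
Qed.

Lemma all_partials_mderiv (f : {mpoly C[n]}) i g :
  all_partials f g -> all_partials f g^`M(i).
Proof. by move=> [e ->]; exists (e + U_(i))%MM; rewrite mderivmDm mderivmU1m. Qed.

Lemma DPD_span_dim (f : {mpoly C[n]}) : is_span_dim (all_partials f) (DPD f).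
Proof.
pose s := [seq f^`M[bmnm e] | e : 'X_{1..n < msize f}].
apply: (@span_dim_seqP _ _ _ s) => [_ /mapP[e _ ->]|_ [e ->]].
  by exists (bmnm e).
have [lt_e|ge_e] := ltnP (mdeg e) (msize f).
  by apply: in_span_self; apply: (map_f _ (mem_enum _ (BMultinom lt_e))).
rewrite mderivm_eq0 //; exists 0%N, (fun=> 0), (fun=> 0).
by rewrite big_ord0; split=> [[]|].
Qed.

End Partials.

Section ABPEvaluation.
Variables (C : fieldType) (n d D : nat) (part : 'I_n -> 'I_d).
Variables (b : 'I_D -> {mpoly C[n]}) (A : 'I_n -> 'M[C]_D).
Hypothesis mderiv_lincomb :
  forall i c, (lincomb b c)^`M(i) = lincomb b (A i *m c).

Let mxMP m p (M : 'M[C]_(m, p)) : 'M[{mpoly C[n]}]_(m, p) :=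
  map_mx (fun c => c%:MP) M.
Let layers js (v : 'cV[{mpoly C[n]}]_D) :=
  foldr (fun j acc => smABP_layer part A j *m acc) v js.

Lemma layers_sum js (Q : pred 'I_n) (a : 'I_n -> {mpoly C[n]}) v :
  layers js (\sum_(i | Q i) a i *: v i) = \sum_(i | Q i) a i *: layers js (v i).
Proof.
elim: js => [|j js IH] //=; rewrite IH mulmx_sumr; apply: eq_bigr => i _.
by rewrite scalemxAr.
Qed.

Lemma smABP_layer_mxMP j (c : 'cV[C]_D) :
  smABP_layer part A j *m mxMP c =
  \sum_(i | part i == j) 'X_i *: mxMP (A i *m c).
Proof.
by rewrite mulmx_suml; apply: eq_bigr => i _; rewrite -scalemxAl /mxMP map_mxM.
Qed.

Lemma lincomb_mcoeff0 (c : 'cV[C]_D) :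
  (lincomb b c)@_0 = \sum_(k < D) c k ord0 * (b k)@_0.
Proof. by rewrite /lincomb raddf_sum; apply: eq_bigr => k _; apply: mcoeffZ. Qed.

Lemma layers_lincomb js (c : 'cV[C]_D) :
  uniq js -> set_multilinear_on part js (lincomb b c) ->
  ((mxMP (\col_k (b k)@_0))^T *m layers js (mxMP c)) ord0 ord0 = lincomb b c.
Proof.
elim/last_ind: js c => [|js j IH] c.
  move=> _ /set_multilinear_on_nil ->; rewrite /= !mxE lincomb_mcoeff0 raddf_sum.
  by apply: eq_bigr => k _; rewrite !mxE -mpolyCM mulrC.
rewrite rcons_uniq => /andP[j_notin js_uniq] g_sml.
rewrite /layers foldr_rcons -/(layers _ _) smABP_layer_mxMP layers_sum.
have j_in : j \in rcons js j by rewrite mem_rcons mem_head.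
rewrite mulmx_sumr summxE [RHS](set_multilinear_on_euler j_in g_sml).
apply: eq_bigr => i /eqP part_i; rewrite -scalemxAr mxE IH -?mderiv_lincomb //.
exact: set_multilinear_on_mderiv g_sml.
Qed.

End ABPEvaluation.

Lemma set_multilinear_onT (C : fieldType) n d (part : 'I_n -> 'I_d)
    (g : {mpoly C[n]}) :
  set_multilinear part g -> set_multilinear_on part (enum 'I_d) g.
Proof. by move=> g_sml m m_supp j; rewrite mem_enum; apply: g_sml. Qed.

Theorem theorem1p6 (C : numClosedFieldType) (n d : nat)
    (part : 'I_n -> 'I_d) (part_blocks_nonempty : forall j : 'I_d, exists i, part i = j)
    (f : {mpoly C[n]}) (Hf : set_multilinear part f) :
  exists w : nat, (w <= DPD f)%N /\ has_comm_smABP part f w.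
Proof.
have [b [b_in_span indep_b partials_spanned]] := span_dim_basisP (DPD_span_dim f).
have /fin_all_exists [A mderiv_lincomb] : forall i, exists A : 'M[C]_(DPD f),
    forall c, (lincomb b c)^`M(i) = lincomb b (A *m c).
  by move=> i; apply: stable_span_mx b_in_span partials_spanned
    (all_partials_mderiv i).
have [c f_lincomb] : spanned_by b f.
  by apply: partials_spanned; exists 0%MM; rewrite mderivm0m.
exists (DPD f); split=> //; exists 1%g, A, (\col_k (b k)@_0), c; split.
  move=> i i'; apply: (lincomb_mx_comm indep_b (mderiv_lincomb i)
    (mderiv_lincomb i')).
  by move=> v; rewrite mderiv_comm.
have f_sml : set_multilinear_on part (enum 'I_d) (lincomb b c).
  by rewrite -f_lincomb; apply: set_multilinear_onT.
rewrite /smABP_poly (eq_map (@perm1 _)) map_id {1}f_lincomb.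
by apply/esym/layers_lincomb => //; apply: enum_uniq.
Qed.
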